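(* Assume the Continuum Hypothesis. Let $a$ be any non-trivial automorphism of the Turing degrees. Then there is no family $G$ of $1$-generic Turing degrees such that: (1) for every Turing degree $\mathbf{y}$ there is a degree in $G$ that is $1$-generic over $\mathbf{y}$; and (2) for every $\mathbf{x}\in G$ and every degree $\mathbf{y}$, if $\mathbf{x}$ is $1$-generic over $\mathbf{y}$, then there are reals $x,z\in 2^{\omega}$ with $\deg(x)=\mathbf{x}$ and $\deg(z)=a(\mathbf{x})$ such that the pair $(x,z)$ is $1$-generic over $\mathbf{y}$.
   Context: Reals are identified with elements of $2^{\omega}$. A Turing degree is an equivalence class of reals under Turing equivalence $\equiv_T$; an automorphism of the Turing degrees is a bijection $a$ of the set of Turing degrees with $\mathbf{u}\le_T\mathbf{v}\iff a(\mathbf{u})\le_T a(\mathbf{v})$; it is non-trivial if it is not the identity. For a real $y$, a real $g\in 2^{\omega}$ is $1$-generic over $y$ if for every set $S\subseteq 2^{<\omega}$ that is $\Sigma^0_1$ relative to $y$ there is an initial segment $\sigma$ of $g$ such that either $\sigma\in S$ or no extension $\tau\supseteq\sigma$ lies in $S$. A pair $(x,z)\in 2^{\omega}\times 2^{\omega}$ is $1$-generic over $y$ if for every set $S\subseteq 2^{<\omega}\times 2^{<\omega}$ that is $\Sigma^0_1$ relative to $y$ there are initial segments $\sigma$ of $x$ and $\tau$ of $z$ such that either $(\sigma,\tau)\in S$ or no pair $(\sigma',\tau')$ with $\sigma'\supseteq\sigma,\tau'\supseteq\tau$ lies in $S$. Being $1$-generic over $y$ depends only on the degree of $y$, so one speaks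 of being $1$-generic over a degree $\mathbf{y}$. A degree is a $1$-generic degree if it contains a $1$-generic real (over a computable real), and a degree $\mathbf{x}$ is $1$-generic over $\mathbf{y}$ if it contains a real $1$-generic over $\mathbf{y}$. *)

From Stdlib Require Import Arith List.
Import ListNotations.

Definition real := nat -> bool.

Definition cpair (x y : nat) : nat := (x + y) * (x + y + 1) / 2 + y.

(** Codes of oracle partial recursive functions nat -> nat
    (unary, with Cantor pairing used for tupling). *)
Inductive code : Type :=
| CZero : code
| CSucc : code
| CId   : code
| COracle : code
| CFst  : code
| CSnd  : code
| CPair : code -> code -> code
| CComp : code -> code -> code
| CRec  : code -> code -> code
| CMu   : code -> code.

Inductive eval (A : real) : code -> nat -> nat -> Prop :=
| ev_zero x : eval A CZero x 0
| ev_succ x : eval A CSucc x (S x)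
| ev_id x : eval A CId x x
| ev_oracle x : eval A COracle x (if A x then 1 else 0)
| ev_fst a b : eval A CFst (cpair a b) a
| ev_snd a b : eval A CSnd (cpair a b) b
| ev_pair f g x u v : eval A f x u -> eval A g x v -> eval A (CPair f g) x (cpair u v)
| ev_comp f g x w v : eval A g x w -> eval A f w v -> eval A (CComp f g) x v
| ev_rec0 f g x v : eval A f x v -> eval A (CRec f g) (cpair x 0) v
| ev_recS f g x n w v :
    eval A (CRec f g) (cpair x n) w ->
    eval A g (cpair x (cpair n w)) v ->
    eval A (CRec f g) (cpair x (S n)) v
| ev_mu f x n :
    eval A f (cpair x n) 0 ->
    (forall m, m < n -> exists k, eval A f (cpair x m) (S k)) ->
    eval A (CMu f) x n.

Definition turing_le (x y : real) : Prop :=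
  exists c : code, forall n, eval y c n (if x n then 1 else 0).
Definition turing_eq (x y : real) : Prop := turing_le x y /\ turing_le y x.

Definition bstring := list bool.
Fixpoint scode (s : bstring) : nat :=
  match s with
  | [] => 0
  | b :: t => S (cpair (if b then 1 else 0) (scode t))
  end.

Definition init_seg (s : bstring) (g : real) : Prop :=
  forall i, i < length s -> nth i s false = g i.

Definition extends (t s : bstring) : Prop := exists u, t = s ++ u.

(** Sigma^0_1 (relative to y) sets of strings / pairs of strings:
    domains of y-partial-computable functions, via the coding. *)
Definition sigma01_strings (y : real) (S : bstring -> Prop) : Prop :=
  exists c : code, forall s, S s <-> exists v, eval y c (scode s) v.
Definition sigma01_pairs (y : real) (S : bstring -> bstring -> Prop) : Prop :=
  exists c : code, forall s t, S s t <-> exists v, eval y c (cpair (scode s) (scode t)) v.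

Definition one_generic_over (y g : real) : Prop :=
  forall S, sigma01_strings y S ->
    exists s, init_seg s g /\ (S s \/ forall t, extends t s -> ~ S t).
Definition pair_one_generic_over (y x z : real) : Prop :=
  forall S, sigma01_pairs y S ->
    exists s t, init_seg s x /\ init_seg t z /\
      (S s t \/ forall s' t', extends s' s -> extends t' t -> ~ S s' t').

(** Degree-level notions (a degree is represented by any of its members). *)
Definition zero_real : real := fun _ => false.
Definition generic_degree (x : real) : Prop :=
  exists g, turing_eq g x /\ one_generic_over zero_real g.
Definition degree_generic_over (x y : real) : Prop :=
  exists g, turing_eq g x /\ one_generic_over y g.

(** An automorphism of the Turing degrees, represented by a map on reals
    inducing it: order preserving and reflecting (hence well defined and
    injective on degrees) and surjective on degrees. *)
Definition degree_automorphism (a : real -> real) : Prop :=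
  (forall x y, turing_le x y <-> turing_le (a x) (a y)) /\
  (forall y, exists x, turing_eq (a x) y).
Definition nontrivial_aut (a : real -> real) : Prop :=
  exists x, ~ turing_eq (a x) x.

(** A family of degrees: a predicate on reals closed under Turing equivalence. *)
Definition degree_family (G : real -> Prop) : Prop :=
  forall x x', turing_eq x x' -> G x -> G x'.

(** The Continuum Hypothesis: every set of reals is countable
    or has the cardinality of the continuum. *)
Definition CH : Prop :=
  forall A : real -> Prop,
    (exists f : {x : real | A x} -> nat, forall u v, f u = f v -> u = v) \/
    (exists g : real -> {x : real | A x}, forall u v, g u = g v -> u = v).

From Stdlib Require Import Arith Lia List Bool.
Import ListNotations.

(* Condition (2) alone is contradictory.
   Applying (2) with y = 0 to some x in G gives a 1-generic pair (x', z) with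
   z == a(x).  The left half of a pair 1-generic over y is 1-generic over the
   right half: by the use principle, a set of strings Sigma^0_1 in z becomes a
   Sigma^0_1 set of pairs of strings.  So x is 1-generic over deg(z), and (2)
   with y = z gives a pair (x'', z') 1-generic over z with z' == z.  But the
   right half of a pair 1-generic over y is never y-computable: the pairs whose
   second string disagrees with it somewhere form a y-Sigma^0_1 set that can
   always be entered. *)

(** * Cantor pairing and evaluation *)

Lemma triangle_succ s : S s * (S s + 1) / 2 = s * (s + 1) / 2 + S s.
Proof.
  replace (S s * (S s + 1)) with (s * (s + 1) + S s * 2) by nia.
  rewrite Nat.div_add by lia. lia.
Qed.

Lemma triangle_gap s s' : s < s' -> s * (s + 1) / 2 + s < s' * (s' + 1) / 2.
Proof. induction 1; rewrite triangle_succ; lia. Qed.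

Lemma cpair_inj a b c d : cpair a b = cpair c d -> a = c /\ b = d.
Proof.
  unfold cpair; intros H.
  destruct (lt_eq_lt_dec (a + b) (c + d)) as [[Hlt|Heq]|Hlt].
  - pose proof (triangle_gap _ _ Hlt); lia.
  - rewrite Heq in H; lia.
  - pose proof (triangle_gap _ _ Hlt); lia.
Qed.

Ltac cpair_inj := repeat match goal with
  | H : cpair _ _ = cpair _ _ |- _ => apply cpair_inj in H; destruct H as [? ?]; subst
  end.

(* The derived principle [eval_ind] gives no induction hypothesis for the
   side condition of [ev_mu]. *)
Section EvalStrongInduction.
Variable A : real.
Variable P : code -> nat -> nat -> Prop.
Hypothesis Hzero : forall x, P CZero x 0.
Hypothesis Hsucc : forall x, P CSucc x (S x).
Hypothesis Hid : forall x, P CId x x.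
Hypothesis Horacle : forall x, P COracle x (if A x then 1 else 0).
Hypothesis Hfst : forall a b, P CFst (cpair a b) a.
Hypothesis Hsnd : forall a b, P CSnd (cpair a b) b.
Hypothesis Hpair : forall f g x u v,
  eval A f x u -> P f x u -> eval A g x v -> P g x v -> P (CPair f g) x (cpair u v).
Hypothesis Hcomp : forall f g x w v,
  eval A g x w -> P g x w -> eval A f w v -> P f w v -> P (CComp f g) x v.
Hypothesis Hrec0 : forall f g x v,
  eval A f x v -> P f x v -> P (CRec f g) (cpair x 0) v.
Hypothesis HrecS : forall f g x n w v,
  eval A (CRec f g) (cpair x n) w -> P (CRec f g) (cpair x n) w ->
  eval A g (cpair x (cpair n w)) v -> P g (cpair x (cpair n w)) v ->
  P (CRec f g) (cpair x (S n)) v.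
Hypothesis Hmu : forall f x n,
  eval A f (cpair x n) 0 -> P f (cpair x n) 0 ->
  (forall m, m < n -> exists k, P f (cpair x m) (S k)) ->
  P (CMu f) x n.

Fixpoint eval_ind_strong c n v (e : eval A c n v) {struct e} : P c n v :=
  match e in eval _ c n v return P c n v with
  | ev_zero _ x => Hzero x
  | ev_succ _ x => Hsucc x
  | ev_id _ x => Hid x
  | ev_oracle _ x => Horacle x
  | ev_fst _ a b => Hfst a b
  | ev_snd _ a b => Hsnd a b
  | ev_pair _ f g x u v e1 e2 =>
      Hpair f g x u v e1 (eval_ind_strong _ _ _ e1) e2 (eval_ind_strong _ _ _ e2)
  | ev_comp _ f g x w v e1 e2 =>
      Hcomp f g x w v e1 (eval_ind_strong _ _ _ e1) e2 (eval_ind_strong _ _ _ e2)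
  | ev_rec0 _ f g x v e1 => Hrec0 f g x v e1 (eval_ind_strong _ _ _ e1)
  | ev_recS _ f g x n w v e1 e2 =>
      HrecS f g x n w v e1 (eval_ind_strong _ _ _ e1) e2 (eval_ind_strong _ _ _ e2)
  | ev_mu _ f x n e1 Hlt => Hmu f x n e1 (eval_ind_strong _ _ _ e1)
      (fun m Hm => match Hlt m Hm with
                   | ex_intro _ k ek => ex_intro _ k (eval_ind_strong _ _ _ ek)
                   end)
  end.
End EvalStrongInduction.

Lemma eval_deterministic A c n v v' : eval A c n v -> eval A c n v' -> v = v'.
Proof.
  intros H; revert v'.
  induction H using eval_ind_strong; intros v' H'; inversion H'; subst; cpair_inj;
    try congruence; auto.
  - match goal with Hw : eval A g x ?w0 |- _ => rewrite <- (IHeval1 _ Hw) in * end; auto.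
  - match goal with
    | Hn : S _ = S _, Hw : eval A (CRec f g) _ ?w0 |- _ =>
      injection Hn as <-; rewrite <- (IHeval1 _ Hw) in *; auto
    end.
  - match goal with
    | Hbelow : forall m, m < n -> exists k, forall v', _,
      Hzero' : eval A f (cpair x v') 0, Hbelow' : forall m, m < v' -> _ |- _ =>
      destruct (lt_eq_lt_dec n v') as [[Hlt|Heq]|Hlt]; auto;
      [ destruct (Hbelow' _ Hlt) as [k Hk]; apply IHeval in Hk
      | destruct (Hbelow _ Hlt) as [k Hk]; apply Hk in Hzero' ]; discriminate
    end.
Qed.

Ltac invert_eval := repeat (match goal with
  | H : eval _ (CComp _ _) _ _ |- _ => inversion H; subst; clear H
  | H : eval _ (CPair _ _) _ _ |- _ => inversion H; subst; clear H
  | H : eval _ CFst _ _ |- _ => inversion H; subst; clear H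
  | H : eval _ CSnd _ _ |- _ => inversion H; subst; clear H
  | H : eval _ CId _ _ |- _ => inversion H; subst; clear H
  | H : eval _ CZero _ _ |- _ => inversion H; subst; clear H
  | H : eval _ CSucc _ _ |- _ => inversion H; subst; clear H
  end; cpair_inj).

(** * Programs on codes of strings *)

Definition iszero_code : code :=
  CComp (CRec (CComp CSucc CZero) CZero) (CPair CZero CId).

Lemma eval_iszero A n : eval A iszero_code n (if n =? 0 then 1 else 0).
Proof.
  eapply ev_comp; [apply ev_pair; [apply ev_zero | apply ev_id] |].
  assert (Hbase : eval A (CComp CSucc CZero) 0 1).
  { eapply ev_comp; [apply ev_zero | apply ev_succ]. }
  destruct n as [|n]; [now apply ev_rec0 |].
  assert (Hrec : exists w, eval A (CRec (CComp CSucc CZero) CZero) (cpair 0 n) w).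
  { induction n as [|n [w Hw]]; [exists 1; now apply ev_rec0 |].
    exists 0; eapply ev_recS; [exact Hw | apply ev_zero]. }
  destruct Hrec as [w Hw]; eapply ev_recS; [exact Hw | apply ev_zero].
Qed.

Definition pred_code : code := CComp (CRec CZero (CComp CFst CSnd)) (CPair CZero CId).

Lemma eval_pred A n : eval A pred_code n (pred n).
Proof.
  eapply ev_comp; [apply ev_pair; [apply ev_zero | apply ev_id] |].
  induction n as [|n IHn]; [apply ev_rec0, ev_zero |].
  eapply ev_recS; [exact IHn |].
  eapply ev_comp; [apply ev_snd | apply ev_fst].
Qed.

(* The identity restricted to positive inputs: minimisation searches for a
   witness of [n <> 0] and diverges at [0]. *)
Definition guard_code : code :=
  CComp CFst (CPair CId (CMu (CComp iszero_code CFst))).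

Lemma eval_guard A n : eval A guard_code (S n) (S n).
Proof.
  apply ev_comp with (w := cpair (S n) 0); [| apply ev_fst].
  apply ev_pair; [apply ev_id |].
  apply ev_mu; [| intros; lia].
  eapply ev_comp; [apply ev_fst | apply eval_iszero].
Qed.

Lemma eval_guard_inv A n v : eval A guard_code n v -> v = n /\ n <> 0.
Proof.
  intros H; unfold guard_code in H; invert_eval.
  match goal with H : eval _ (CMu _) _ _ |- _ => inversion H; subst end.
  invert_eval.
  match goal with H : eval _ iszero_code _ _ |- _ =>
    pose proof (eval_deterministic _ _ _ _ _ H (eval_iszero _ _)) as Hz end.
  split; [reflexivity | intros ->; discriminate Hz].
Qed.

Definition tail_code : code := CComp CSnd pred_code.

Lemma eval_tail A t : eval A tail_code (scode t) (scode (tl t)).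
Proof.
  eapply ev_comp; [apply eval_pred |].
  destruct t; [exact (ev_snd A 0 0) | apply ev_snd].
Qed.

Definition head_code : code := CComp CFst (CComp pred_code guard_code).

Lemma eval_head A b r : eval A head_code (scode (b :: r)) (if b then 1 else 0).
Proof.
  eapply ev_comp; [eapply ev_comp; [apply eval_guard | apply eval_pred] | apply ev_fst].
Qed.

Lemma eval_head_inv A t v :
  eval A head_code (scode t) v -> exists b r, t = b :: r /\ v = if b then 1 else 0.
Proof.
  intros H; inversion H as [| | | | | | | ? ? ? w ? Hpred Hfst | | |]; subst.
  inversion Hpred as [| | | | | | | ? ? ? u ? Hguard Hp | | |]; subst.
  apply eval_guard_inv in Hguard as [-> Hnz].
  pose proof (eval_deterministic _ _ _ _ _ Hp (eval_pred _ _)); subst.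
  destruct t as [|b r]; [contradiction |].
  inversion Hfst; cpair_inj; eauto.
Qed.

Definition drop_code : code := CRec CId (CComp tail_code (CComp CSnd CSnd)).

Lemma skipn_S_tl {T} n (t : list T) : skipn (S n) t = tl (skipn n t).
Proof. revert t; induction n as [|n IHn]; intros [|b t]; simpl; auto; apply IHn. Qed.

Lemma eval_drop A t n : eval A drop_code (cpair (scode t) n) (scode (skipn n t)).
Proof.
  induction n as [|n IHn]; [apply ev_rec0, ev_id |].
  eapply ev_recS; [exact IHn |].
  rewrite skipn_S_tl.
  eapply ev_comp; [eapply ev_comp; [apply ev_snd | apply ev_snd] | apply eval_tail].
Qed.

Definition lookup_code : code := CComp head_code drop_code.

Lemma eval_lookup A t n :
  n < length t -> eval A lookup_code (cpair (scode t) n) (if nth n t false then 1 else 0).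
Proof.
  intros Hn; eapply ev_comp; [apply eval_drop |].
  pose proof (hd_error_skipn n t) as Hhd.
  rewrite (nth_error_nth' t false Hn) in Hhd.
  destruct (skipn n t) as [|b r]; inversion Hhd; apply eval_head.
Qed.

Lemma eval_lookup_inv A t n v :
  eval A lookup_code (cpair (scode t) n) v ->
  n < length t /\ v = if nth n t false then 1 else 0.
Proof.
  intros H; inversion H as [| | | | | | | ? ? ? w ? Hdrop Hhead | | |]; subst.
  pose proof (eval_deterministic _ _ _ _ _ Hdrop (eval_drop _ _ _)); subst.
  apply eval_head_inv in Hhead as (b & r & Hskip & ->).
  pose proof (hd_error_skipn n t) as Hnth; rewrite Hskip in Hnth.
  split.
  - apply nth_error_Some; rewrite <- Hnth; discriminate.
  - now rewrite (nth_error_nth t n false (eq_sym Hnth)).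
Qed.

Definition eqb_code : code := CRec iszero_code CFst.

Lemma eval_eqb A (a b : bool) :
  eval A eqb_code (cpair (if a then 1 else 0) (if b then 1 else 0)) (if eqb a b then 1 else 0).
Proof.
  destruct b.
  - eapply ev_recS; [apply ev_rec0, eval_iszero | destruct a; apply ev_fst].
  - apply ev_rec0; destruct a; apply eval_iszero.
Qed.

(** * Replacing the oracle *)

Fixpoint subst_oracle (d c : code) : code :=
  match c with
  | COracle => d
  | CPair f g => CPair (subst_oracle d f) (subst_oracle d g)
  | CComp f g => CComp (subst_oracle d f) (subst_oracle d g)
  | CRec f g => CRec (subst_oracle d f) (subst_oracle d g)
  | CMu f => CMu (subst_oracle d f)
  | c => c
  end.

Lemma eval_subst_oracle (w z : real) (d : code) c n v :
  (forall m, eval z d m (if w m then 1 else 0)) ->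
  eval w c n v -> eval z (subst_oracle d c) n v.
Proof.
  intros Hd H; induction H using eval_ind_strong; simpl; try constructor; auto.
  - eapply ev_comp; eauto.
  - eapply ev_recS; eauto.
Qed.

Lemma turing_le_trans x y z : turing_le x y -> turing_le y z -> turing_le x z.
Proof.
  intros [c Hc] [d Hd]; exists (subst_oracle d c).
  intros n; exact (eval_subst_oracle y z d c n _ Hd (Hc n)).
Qed.

Definition assoc_code : code := CPair (CPair CFst (CComp CFst CSnd)) (CComp CSnd CSnd).
Definition unassoc_code : code := CPair (CComp CFst CFst) (CPair (CComp CSnd CFst) CSnd).

Lemma eval_assoc A t x n : eval A assoc_code (cpair t (cpair x n)) (cpair (cpair t x) n).
Proof.
  apply ev_pair; [apply ev_pair |]; [apply ev_fst | ..];
    eapply ev_comp; [apply ev_snd | apply ev_fst | apply ev_snd | apply ev_snd].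
Qed.

Lemma eval_assoc_inv A t m w :
  eval A assoc_code (cpair t m) w -> exists x n, m = cpair x n /\ w = cpair (cpair t x) n.
Proof. intros H; unfold assoc_code in H; invert_eval; eauto. Qed.

Lemma eval_unassoc A t x n : eval A unassoc_code (cpair (cpair t x) n) (cpair t (cpair x n)).
Proof.
  apply ev_pair; [| apply ev_pair; [| apply ev_snd]];
    eapply ev_comp; [apply ev_fst | apply ev_fst | apply ev_fst | apply ev_snd].
Qed.

Lemma eval_comp_unassoc_inv A f t x n v :
  eval A (CComp f unassoc_code) (cpair (cpair t x) n) v -> eval A f (cpair t (cpair x n)) v.
Proof.
  intros H; inversion H as [| | | | | | | ? ? ? w ? Hun Hf | | |]; subst.
  now rewrite (eval_deterministic _ _ _ _ _ (eval_unassoc A t x n) Hun).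
Qed.

(* [string_oracle c] runs [c] on input [x] with the oracle read off the
   string [t], on input [cpair (scode t) x]; the string is threaded through
   every subcomputation. *)
Fixpoint string_oracle (c : code) : code :=
  match c with
  | CZero => CComp CZero CSnd
  | CSucc => CComp CSucc CSnd
  | CId => CSnd
  | COracle => lookup_code
  | CFst => CComp CFst CSnd
  | CSnd => CComp CSnd CSnd
  | CPair f g => CPair (string_oracle f) (string_oracle g)
  | CComp f g => CComp (string_oracle f) (CPair CFst (string_oracle g))
  | CRec f g => CComp (CRec (string_oracle f) (CComp (string_oracle g) unassoc_code)) assoc_code
  | CMu f => CMu (CComp (string_oracle f) unassoc_code)
  end.

Lemma eval_string_oracle_sound A z t c n v :
  init_seg t z -> eval A (string_oracle c) (cpair (scode t) n) v -> eval z c n v.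
Proof.
  intros Ht; revert n v; induction c; intros n v H; simpl in H.
  - invert_eval. apply ev_zero.
  - invert_eval. apply ev_succ.
  - invert_eval. apply ev_id.
  - apply eval_lookup_inv in H as [Hn ->]. rewrite (Ht n Hn). apply ev_oracle.
  - invert_eval. apply ev_fst.
  - invert_eval. apply ev_snd.
  - invert_eval. apply ev_pair; eauto.
  - invert_eval. eapply ev_comp; eauto.
  - inversion H as [| | | | | | | ? ? ? w ? Hassoc Hrec | | |]; subst.
    apply eval_assoc_inv in Hassoc as (x & b & -> & ->).
    clear H; revert v Hrec; induction b as [|b IHb]; intros v Hrec;
      inversion Hrec as [| | | | | | | | | ? ? ? ? w ? Hprev Hstep |]; subst;
      cpair_inj; try discriminate.
    + apply ev_rec0; auto.
    + match goal with Hn : S _ = S b |- _ => injection Hn as -> end.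
      apply eval_comp_unassoc_inv in Hstep.
      eapply ev_recS; eauto.
  - inversion H as [| | | | | | | | | | ? ? ? Hzero Hbelow]; subst.
    apply ev_mu; [now apply IHc, eval_comp_unassoc_inv, Hzero |].
    intros m Hm; destruct (Hbelow m Hm) as [k Hk].
    exists k; now apply IHc, eval_comp_unassoc_inv.
Qed.

Lemma uniform_bound (R : nat -> nat -> Prop) n :
  (forall m K K', K <= K' -> R m K -> R m K') ->
  (forall m, m < n -> exists K, R m K) -> exists K, forall m, m < n -> R m K.
Proof.
  intros Hmono; induction n as [|n IHn]; intros Hex; [exists 0; lia |].
  destruct IHn as [K1 HK1]; [intros m Hm; apply Hex; lia |].
  destruct (Hex n) as [K2 HK2]; [lia |].
  exists (max K1 K2); intros m Hm.
  destruct (Nat.eq_dec m n) as [->|Hne]; eapply Hmono; [| exact HK2 | | apply HK1]; lia.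
Qed.

(* The use principle: a converging oracle computation only queries finitely
   many bits, so it is reproduced from any long enough initial segment. *)
Lemma eval_string_oracle_use A z c n v :
  eval z c n v -> exists k, forall t, init_seg t z -> k <= length t ->
    eval A (string_oracle c) (cpair (scode t) n) v.
Proof.
  induction 1 as [x | x | x | x | a b | a b
                 | f g x u v _ [k1 H1] _ [k2 H2] | f g x w v _ [k1 H1] _ [k2 H2]
                 | f g x v _ [k H1] | f g x n w v _ [k1 H1] _ [k2 H2]
                 | f x n _ [k0 H0] Hbelow] using eval_ind_strong; simpl.
  - exists 0; intros; eapply ev_comp; [apply ev_snd | apply ev_zero].
  - exists 0; intros; eapply ev_comp; [apply ev_snd | apply ev_succ].
  - exists 0; intros; apply ev_snd.
  - exists (S x); intros t Ht Hlen.
    rewrite <- (Ht x) by lia; apply eval_lookup; lia.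
  - exists 0; intros; eapply ev_comp; [apply ev_snd | apply ev_fst].
  - exists 0; intros; eapply ev_comp; [apply ev_snd | apply ev_snd].
  - exists (max k1 k2); intros.
    apply ev_pair; [apply H1 | apply H2]; auto; lia.
  - exists (max k1 k2); intros.
    eapply ev_comp; [apply ev_pair; [apply ev_fst | apply H1] | apply H2]; auto; lia.
  - exists k; intros.
    eapply ev_comp; [apply eval_assoc | apply ev_rec0; auto].
  - exists (max k1 k2); intros t Ht Hlen.
    eapply ev_comp; [apply eval_assoc |].
    specialize (H1 t Ht ltac:(lia)); simpl in H1.
    inversion H1 as [| | | | | | | ? ? ? w' ? Hassoc Hrec | | |]; subst.
    rewrite (eval_deterministic _ _ _ _ _ Hassoc (eval_assoc _ _ _ _)) in Hrec.
    eapply ev_recS; [exact Hrec |].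
    eapply ev_comp; [apply eval_unassoc | apply H2; auto; lia].
  - destruct (uniform_bound (fun m K => forall t, init_seg t z -> K <= length t ->
         exists k, eval A (string_oracle f) (cpair (scode t) (cpair x m)) (S k)) n)
      as [K HK].
    + intros m K K' HKK' HK t Ht Hlen; apply HK; auto; lia.
    + intros m Hm; destruct (Hbelow m Hm) as [k [K HK]].
      exists K; intros t Ht Hlen; exists k; auto.
    + exists (max k0 K); intros t Ht Hlen; apply ev_mu.
      * eapply ev_comp; [apply eval_unassoc | apply H0; auto; lia].
      * intros m Hm; destruct (HK m Hm t Ht ltac:(lia)) as [k Hk].
        exists k; eapply ev_comp; [apply eval_unassoc | exact Hk].
Qed.

(** * Genericity of pairs *)

Definition prefix (z : real) (m : nat) : bstring := map z (seq 0 m).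

Lemma length_prefix z m : length (prefix z m) = m.
Proof. unfold prefix; now rewrite length_map, length_seq. Qed.

Lemma nth_prefix z m i : i < m -> nth i (prefix z m) false = z i.
Proof.
  intros Hi; unfold prefix.
  rewrite (nth_indep _ false (z 0)) by now rewrite length_map, length_seq.
  now rewrite map_nth, seq_nth.
Qed.

Lemma init_seg_prefix z m : init_seg (prefix z m) z.
Proof. intros i Hi; rewrite length_prefix in Hi; now apply nth_prefix. Qed.

Lemma prefix_extends z t m : init_seg t z -> length t <= m -> extends (prefix z m) t.
Proof.
  intros Ht Hlen; unfold extends, prefix.
  replace m with (length t + (m - length t)) by lia.
  rewrite seq_app, map_app; eexists; f_equal.
  apply (nth_ext _ _ false false); [now rewrite length_map, length_seq |].
  intros i Hi; rewrite length_map, length_seq in Hi.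
  rewrite (Ht i Hi); exact (nth_prefix z _ i Hi).
Qed.

Lemma pair_generic_left_generic_over_right y x z :
  pair_one_generic_over y x z -> one_generic_over z x.
Proof.
  intros Hgen S [c Hc].
  set (swapped := CComp (string_oracle c) (CPair CSnd CFst)).
  destruct (Hgen (fun s t => exists v, eval y swapped (cpair (scode s) (scode t)) v))
    as (s & t & Hs & Ht & [[v Hin] | Hout]); [now exists swapped |..];
    exists s; split; auto.
  - left; apply Hc; exists v; unfold swapped in Hin; invert_eval.
    eapply eval_string_oracle_sound; eauto.
  - right; intros s' Hext HS.
    apply Hc in HS as [v HS].
    destruct (eval_string_oracle_use y _ _ _ _ HS) as [k Hk].
    apply (Hout s' (prefix z (max k (length t))) Hext).
    + apply prefix_extends; auto; lia.
    + exists v; eapply ev_comp; [apply ev_pair; [apply ev_snd | apply ev_fst] |].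
      apply Hk; [apply init_seg_prefix | rewrite length_prefix; lia].
Qed.

(* On input [cpair (cpair s t) i], compares bit [i] of the string [t] with
   bit [i] of the real computed by [d]; the result is [0] on a mismatch. *)
Definition agree_code (d : code) : code :=
  CComp eqb_code (CPair (CComp lookup_code (CPair (CComp CSnd CFst) CSnd)) (CComp d CSnd)).

Section Agreement.
Variables (y w : real) (d : code).
Hypothesis Hd : forall n, eval y d n (if w n then 1 else 0).

Lemma eval_agree s t i :
  i < length t ->
  eval y (agree_code d) (cpair (cpair s (scode t)) i)
    (if eqb (nth i t false) (w i) then 1 else 0).
Proof.
  intros Hi; eapply ev_comp; [| apply eval_eqb].
  apply ev_pair; eapply ev_comp; [| apply eval_lookup; exact Hi | apply ev_snd | apply Hd].
  apply ev_pair; [eapply ev_comp; [apply ev_fst | apply ev_snd] | apply ev_snd].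
Qed.

Lemma eval_agree_inv s t i r :
  eval y (agree_code d) (cpair (cpair s (scode t)) i) r ->
  i < length t /\ r = if eqb (nth i t false) (w i) then 1 else 0.
Proof.
  intros H; assert (Hi : i < length t).
  { unfold agree_code in H; invert_eval.
    match goal with Hl : eval _ lookup_code _ _ |- _ => now apply eval_lookup_inv in Hl end. }
  split; [exact Hi |].
  exact (eval_deterministic _ _ _ _ _ H (eval_agree s t i Hi)).
Qed.

End Agreement.

Lemma pair_generic_right_not_le y x w :
  pair_one_generic_over y x w -> ~ turing_le w y.
Proof.
  intros Hgen [d Hd].
  destruct (Hgen (fun s t => exists i, eval y (CMu (agree_code d)) (cpair (scode s) (scode t)) i))
    as (s & t & Hs & Ht & [[i Hin] | Hout]); [now exists (CMu (agree_code d)) |..].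
  - inversion Hin as [| | | | | | | | | | ? ? ? Hmis _]; subst.
    apply (eval_agree_inv _ _ _ Hd) in Hmis as [Hi Hneq].
    rewrite (Ht i Hi), eqb_reflx in Hneq; discriminate.
  - set (b := negb (w (length t))).
    assert (Hlen : length (t ++ [b]) = S (length t)) by (rewrite length_app; simpl; lia).
    apply (Hout s (t ++ [b])); [exists []; symmetry; apply app_nil_r | now exists [b] |].
    exists (length t); apply ev_mu.
    + replace 0 with (if eqb (nth (length t) (t ++ [b]) false) (w (length t)) then 1 else 0).
      * apply eval_agree; [exact Hd | lia].
      * rewrite app_nth2, Nat.sub_diag by lia; unfold b; now destruct (w (length t)).
    + intros m Hm; exists 0.
      replace 1 with (if eqb (nth m (t ++ [b]) false) (w m) then 1 else 0).
      * apply eval_agree; [exact Hd | lia].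
      * rewrite app_nth1, (Ht m Hm), eqb_reflx by exact Hm; reflexivity.
Qed.

Theorem mainTheorem1 :
  CH ->
  forall a : real -> real,
    degree_automorphism a -> nontrivial_aut a ->
    ~ (exists G : real -> Prop,
          degree_family G /\
          (forall x, G x -> generic_degree x) /\
          (forall y, exists x, G x /\ degree_generic_over x y) /\
          (forall x y, G x -> degree_generic_over x y ->
             exists x' z, turing_eq x' x /\ turing_eq z (a x) /\
                          pair_one_generic_over y x' z)).
Proof.
  intros _ a _ _ (G & _ & Hgeneric & Hdense & Hpairs).
  destruct (Hdense zero_real) as (x & Gx & _).
  destruct (Hpairs x zero_real Gx (Hgeneric x Gx)) as (x' & z & Hx' & Hz & Hpair).
  assert (Hxz : degree_generic_over x z).
  { exists x'; split; [exact Hx' | exact (pair_generic_left_generic_over_right _ _ _ Hpair)]. }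
  destruct (Hpairs x z Gx Hxz) as (x'' & z' & _ & Hz' & Hpair').
  apply (pair_generic_right_not_le _ _ _ Hpair').
  exact (turing_le_trans _ _ _ (proj1 Hz') (proj2 Hz)).
Qed.
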